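(* Let $X$ be a finite topological space and let $Y$ be a $T_1$-space homotopy equivalent to $X$. Then $X$ is a disjoint union of contractible spaces. *)

From HB Require Import structures.
From mathcomp Require Import all_boot all_order all_algebra.
From mathcomp Require Import all_classical all_reals all_analysis.
From mathcomp Require Import Rstruct Rstruct_topology.


Set Implicit Arguments.
Unset Strict Implicit.
Unset Printing Implicit Defensive.

Import Order.TTheory GRing.Theory Num.Theory.
Local Open Scope classical_set_scope.
Local Open Scope ring_scope.

Definition unit_interval : set Rdefinitions.R :=
  [set t : Rdefinitions.R | (0 <= t)%R /\ (t <= 1)%R].
Definition Itype : topologicalType := set_type unit_interval.

Definition homotopic {X Y : topologicalType} (f g : X -> Y) : Prop :=
  exists H : (Itype * X)%type -> Y,
    continuous H /\
    (forall (t : Itype) (x : X), val t = 0%R -> H (t, x) = f x) /\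
    (forall (t : Itype) (x : X), val t = 1%R -> H (t, x) = g x).

Definition homotopy_equivalent (X Y : topologicalType) : Prop :=
  exists (f : X -> Y) (g : Y -> X),
    continuous f /\ continuous g /\
    homotopic (g \o f) (fun x => x) /\ homotopic (f \o g) (fun y => y).

Definition contractible (X : topologicalType) : Prop :=
  exists x0 : X, homotopic (fun x : X => x) (fun _ => x0).

(* X is (homeomorphic to) the topological disjoint union of contractible
   spaces: X is partitioned into pairwise disjoint open subsets, each of
   which is contractible in the subspace topology. *)
Definition disjoint_union_of_contractibles (X : topologicalType) : Prop :=
  exists P : set (set X),
    (forall U, P U -> open U /\ contractible (set_type U : topologicalType)) /\
    (forall U V, P U -> P V -> U `&` V !=set0 -> U = V) /\
    (forall x : X, exists U, P U /\ U x).

From HB Require Import structures.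
From mathcomp Require Import all_boot all_order all_algebra.
From mathcomp Require Import all_classical all_reals all_analysis.
From mathcomp Require Import Rstruct Rstruct_topology.
From mathcomp Require Import lra.
Local Open Scope classical_set_scope.

(* Let f : X -> Y and g : Y -> X form a homotopy equivalence.  The image of f
   is a finite subset of a T1-space, so all its subsets are closed and every
   fibre of f is open and closed in X.  A homotopy from id to g \o f moves each
   point along a path, which cannot leave a clopen set, so it maps each fibre
   of f into itself; on the fibre over y it ends at the constant map g y, hence
   restricts to a contraction of that fibre.  The fibres of f therefore
   partition X into open contractible pieces. *)

Lemma unit_interval_itv : unit_interval = `[0%R, 1%R].
Proof.
by rewrite set_itvcc; apply/seteqP; split=> x /=; [case=> -> ->|move/andP].
Qed.

Lemma unit_interval_rev (r : Rdefinitions.R) :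
  unit_interval r -> unit_interval (1 - r)%R.
Proof. by case=> r0 r1; split; lra. Qed.

Lemma unit_interval0 : unit_interval 0%R.
Proof. by split; lra. Qed.

Lemma unit_interval1 : unit_interval 1%R.
Proof. by split; lra. Qed.

Definition I0 : Itype := exist _ 0%R (mem_set unit_interval0).
Definition I1 : Itype := exist _ 1%R (mem_set unit_interval1).

Definition Irev (t : Itype) : Itype :=
  exist _ (1 - val t)%R (mem_set (unit_interval_rev _ (set_valP t))).

Lemma Irev_continuous : continuous Irev.
Proof.
apply: (@continuous_comp_initial _ _ _ (@set_val _ unit_interval)) => t.
have : {for t, continuous
          ((cst 1%R : Itype -> Rdefinitions.R^o) - @set_val _ unit_interval)%R}.
  by apply: continuousB; [exact: cst_continuous|exact: initial_continuous].
exact.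
Qed.

Lemma continuous_pair (A B C : topologicalType) (a : A -> B) (b : A -> C) :
  continuous a -> continuous b -> continuous (fun z => (a z, b z)).
Proof. by move=> ca cb z; apply: cvg_pair; [exact: ca|exact: cb]. Qed.

Lemma homotopic_sym (X Y : topologicalType) (f g : X -> Y) :
  homotopic f g -> homotopic g f.
Proof.
case=> H [cH [H0 H1]]; exists (fun z => H (Irev z.1, z.2)); split; [|split].
- have cIrev : continuous (fun z : Itype * X => (Irev z.1, z.2)).
    apply: continuous_pair => z; last exact: cvg_snd.
    exact: (continuous_comp cvg_fst (Irev_continuous _)).
  by move=> z; exact: (continuous_comp (cIrev z) (cH _)).
- by move=> t x t0; apply: H1 => /=; rewrite t0; lra.
- by move=> t x t1; apply: H0 => /=; rewrite t1; lra.
Qed.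

Lemma clopen_path_invariant (X : topologicalType) (p : Itype -> X) (U : set X)
    (s t : Itype) :
  continuous p -> clopen U -> U (p s) -> U (p t).
Proof.
move=> cp [oU cU] Ups.
pose q := valL_ (p s) p.
have qE (r : Itype) : q (val r) = p r by rewrite -[in RHS](valLK (p s) p).
have : connected (q @` unit_interval).
  apply: connected_continuous_connected; last exact/subspace_valL_continuousP'.
  by rewrite unit_interval_itv; exact: segment_connected.
have qI (r : Itype) : (q @` unit_interval) (p r).
  by rewrite -qE; exists (val r) => //; exact: set_valP.
move=> /(_ (q @` unit_interval `&` U)) IU.
have IUE : q @` unit_interval `&` U = q @` unit_interval.
  by apply: IU; [exists (p s)|exists U|exists U].
by have := qI t; rewrite -IUE => -[].
Qed.

Lemma homotopy_clopen_invariant (X Y : topologicalType) (H : Itype * X -> Y)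
    (U : set Y) (s t : Itype) (x : X) :
  continuous H -> clopen U -> U (H (s, x)) -> U (H (t, x)).
Proof.
move=> cH; apply: (@clopen_path_invariant _ (fun r => H (r, x))).
have cx : continuous (fun r : Itype => (r, x)).
  by apply: continuous_pair => r; [exact: cvg_id|exact: cst_continuous].
by move=> r; exact: (continuous_comp (cx r) (cH _)).
Qed.

Lemma preimage_set1_clopen (X Y : topologicalType) (f : X -> Y) (y : Y) :
  accessible_space Y -> continuous f -> finite_set (range f) ->
  clopen (f @^-1` [set y]).
Proof.
move=> T1 cf finf; split; last first.
  by apply: ((continuous_closedP f).1 cf); exact: accessible_closed_set1.
have -> : f @^-1` [set y] = ~` (f @^-1` (range f `\ y)).
  apply/seteqP; split=> x /=; first by move=> -> [].
  by move=> h; apply: contrapT => fxy; apply: h; split=> //; exists x.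
apply: closed_openC; apply: ((continuous_closedP f).1 cf).
apply: ((@accessible_finite_set_closed Y).1 T1).
by apply: sub_finite_set finf => z [].
Qed.

Lemma contractible_subspace (X : topologicalType) (U : set X)
    (H : Itype * X -> X) (c : X) :
  continuous H -> U c -> (forall t x, U x -> U (H (t, x))) ->
  (forall t x, val t = 0%R -> H (t, x) = x) ->
  (forall t x, val t = 1%R -> U x -> H (t, x) = c) ->
  contractible (set_type U).
Proof.
move=> cH Uc HU H0 H1; exists (exist _ c (mem_set Uc)).
exists (fun z : Itype * set_type U =>
  exist _ (H (z.1, val z.2)) (mem_set (HU z.1 _ (set_valP z.2)))).
split; [|split].
- apply: (@continuous_comp_initial _ _ _ (@set_val _ U)).
  have cval : continuous (fun z : Itype * set_type U => (z.1, val z.2)).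
    apply: continuous_pair => z; first exact: cvg_fst.
    exact: (continuous_comp cvg_snd (@initial_continuous _ _ (@set_val _ U) _)).
  by move=> z; exact: (continuous_comp (cval z) (cH _)).
- by move=> t u t0; apply: val_inj; rewrite /= H0.
- by move=> t u t1; apply: val_inj; rewrite /= H1 //; exact: set_valP.
Qed.

Lemma disjoint_union_of_contractibles_finite_range (X Y : topologicalType)
    (f : X -> Y) (g : Y -> X) :
  accessible_space Y -> continuous f -> finite_set (range f) ->
  homotopic (g \o f) (fun x => x) -> disjoint_union_of_contractibles X.
Proof.
move=> T1 cf finf /homotopic_sym[H [cH [H0 H1]]].
pose fibre x := f @^-1` [set f x].
have fibre_clopen x : clopen (fibre x) by exact: preimage_set1_clopen.
have fibre_invariant x t y : fibre x y -> fibre x (H (t, y)).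
  by move=> xy; apply: (@homotopy_clopen_invariant _ _ _ _ I0) => //; rewrite H0.
exists (range fibre); split; [|split].
- move=> _ [x _ <-]; split; first exact: (fibre_clopen x).1.
  apply: (@contractible_subspace _ _ H (g (f x))) => //.
  + by have := fibre_invariant x I1 x erefl; rewrite H1.
  + exact: fibre_invariant.
  + by move=> t y t1 xy; rewrite H1 //= xy.
- by move=> _ _ [x _ <-] [y _ <-] [z [/= zx zy]]; rewrite /fibre -zx -zy.
- by move=> x; exists (fibre x); split; [exists x|].
Qed.

Theorem mainTheorem5 (X Y : topologicalType) :
  finite_set [set: X] ->
  accessible_space Y ->
  homotopy_equivalent X Y ->
  disjoint_union_of_contractibles X.
Proof.
move=> finX T1 [f [g [cf [_ [gf_id _]]]]].
have finf : finite_set (range f) by exact: finite_image.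
exact: (disjoint_union_of_contractibles_finite_range X Y f g T1 cf finf gf_id).
Qed.
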